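(* Let $a<b$ be real numbers and $I=[a,b]$. There is a constant $\varepsilon_0>0$ such that for every $0<\varepsilon<\varepsilon_0$ there exist piecewise continuous functions $q_1,q_2$ on $I$ and an interval $I_\varepsilon\subset(a,b)$ of length $\varepsilon$ such that $q_1(t)\le q_2(t)$ for all $t\in I\setminus I_\varepsilon$ and $q_1(t)>q_2(t)$ for all $t\in I_\varepsilon$, and for which Sturm's comparison theorem fails on $I$; that is, the equation $u''+q_1(t)u=0$ has a solution $u$ with $u(a)=u(b)=0$ and $u(t)\neq0$ for $t\in(a,b)$, while the equation $v''+q_2(t)v=0$ has a solution $v$ with $v(t)\neq 0$ for all $t\in[a,b]$.
   Context: All coefficient functions are piecewise continuous on $I$, and ''solution'' always means a nontrivial (not identically zero) solution. *)

From Stdlib Require Import Reals List.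
From Coquelicot Require Import Coquelicot.
Open Scope R_scope.

Definition cont_within (f : R -> R) (a b t : R) : Prop :=
  filterlim f (within (fun x => a <= x <= b) (locally t)) (locally (f t)).

(* q is piecewise continuous on [a,b]: there is a partition
   a = p 0 < p 1 < ... < p n = b such that on each open piece (p i, p (i+1))
   q coincides with a function continuous on the closed piece [p i, p (i+1)]
   (i.e. q is continuous on the open piece with finite one-sided limits at
   the partition points). *)
Definition piecewise_continuous (q : R -> R) (a b : R) : Prop :=
  exists (n : nat) (p : nat -> R),
    p 0%nat = a /\ p n = b /\
    (forall i, (i < n)%nat -> p i < p (S i)) /\
    (forall i, (i < n)%nat ->
       exists g : R -> R,
         (forall t, p i <= t <= p (S i) -> cont_within g (p i) (p (S i)) t) /\
         (forall t, p i < t < p (S i) -> g t = q t)).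

Definition is_solution (q u : R -> R) (a b : R) : Prop :=
  exists du : R -> R,
    (forall t, a < t < b -> is_derive u t (du t)) /\
    (forall t, a <= t <= b -> cont_within u a b t /\ cont_within du a b t) /\
    (exists S : list R, forall t, a < t < b -> ~ In t S ->
        is_derive du t (- (q t * u t))) /\
    (exists t, a <= t <= b /\ u t <> 0).

From Stdlib Require Import Reals Lra Lia List.
From Coquelicot Require Import Coquelicot.
Open Scope R_scope.

(* Take [q2 = 0] and [v = 1]. For [q1], pick the C^1 function [u] that rises linearly
   from [u(a) = 0], follows a downward parabola on [J], and falls linearly to [u(b) = 0],
   and set [q1 = -u''/u]: this is [2/u > 0] on [J] and [0] off [J], so [q1 <= q2] off [J]
   while [u] has two zeros and [v] none. *)

Lemma cont_within_continuous (f : R -> R) (a b t : R) :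
  continuous f t -> cont_within f a b t.
Proof. intros Hf. eapply filterlim_filter_le_1; [apply filter_le_within | exact Hf]. Qed.

Lemma cont_within_const (k a b t : R) : cont_within (fun _ => k) a b t.
Proof. apply filterlim_const. Qed.

Lemma is_derive_loc_eq (f g : R -> R) (lo hi x l : R) :
  lo < x < hi -> (forall y, lo < y < hi -> f y = g y) ->
  is_derive g x l -> is_derive f x l.
Proof.
  intros Hx Hfg. apply is_derive_ext_loc.
  apply locally_interval with lo hi; simpl; try tauto.
  intros y Hlo Hhi. symmetry. now apply Hfg.
Qed.

Lemma piecewise_continuous_const (k a b : R) :
  a < b -> piecewise_continuous (fun _ => k) a b.
Proof.
  intros Hab. exists 1%nat, (fun i => match i with 0%nat => a | _ => b end).
  repeat split; try reflexivity.
  - intros i Hi. replace i with 0%nat by lia. exact Hab.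
  - intros i _. exists (fun _ => k). split; [|reflexivity].
    intros t _. apply cont_within_const.
Qed.

Lemma piecewise_continuous_supported (f g : R -> R) (a c d b : R) :
  a < c -> c < d -> d < b ->
  (forall t, c <= t <= d -> continuous g t) ->
  (forall t, c < t < d -> f t = g t) ->
  (forall t, a < t < b -> ~ (c < t < d) -> f t = 0) ->
  piecewise_continuous f a b.
Proof.
  intros Hac Hcd Hdb Hg Hfg Hf0.
  exists 3%nat, (fun i => match i with 0%nat => a | 1%nat => c | 2%nat => d | _ => b end).
  repeat split; try reflexivity.
  - intros i Hi. destruct i as [|[|[|i]]]; simpl; lra || lia.
  - intros i Hi. destruct i as [|[|[|i]]]; simpl; [| | | lia].
    + exists (fun _ => 0). split; [intros; apply cont_within_const|].
      intros t Ht. symmetry. apply Hf0; lra.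
    + exists g. split; [|intros t Ht; symmetry; now apply Hfg].
      intros t Ht. apply cont_within_continuous, Hg, Ht.
    + exists (fun _ => 0). split; [intros; apply cont_within_const|].
      intros t Ht. symmetry. apply Hf0; lra.
Qed.

Lemma is_solution_const (k a b : R) :
  a <= b -> k <> 0 -> is_solution (fun _ => 0) (fun _ => k) a b.
Proof.
  intros Hab Hk. exists (fun _ => 0). split; [|split; [|split]].
  - intros t _. auto_derive; auto.
  - intros t _. split; apply cont_within_const.
  - exists nil. intros t _ _. replace (- (0 * k)) with 0 by ring. auto_derive; auto.
  - exists a. split; [lra | exact Hk].
Qed.

Definition pos_part (y : R) : R := (y + Rabs y) / 2.

Lemma pos_part_nonneg (y : R) : 0 <= y -> pos_part y = y.
Proof. intros Hy. unfold pos_part. rewrite Rabs_pos_eq; lra. Qed.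

Lemma pos_part_nonpos (y : R) : y <= 0 -> pos_part y = 0.
Proof. intros Hy. unfold pos_part. rewrite Rabs_left1; lra. Qed.

Lemma continuous_pos_part (y : R) : continuous pos_part y.
Proof.
  apply continuity_pt_filterlim. unfold pos_part.
  apply continuity_pt_div; [| apply continuity_pt_const; now intros ?? | lra].
  apply continuity_pt_plus; [apply derivable_continuous_pt, derivable_pt_id|].
  apply Rcontinuity_abs.
Qed.

Definition pos_part_sqr (y : R) : R := pos_part y ^ 2.

Lemma is_derive_pos_part_sqr (y : R) : is_derive pos_part_sqr y (2 * pos_part y).
Proof.
  unfold pos_part_sqr. destruct (Rtotal_order y 0) as [Hy | [-> | Hy]].
  - rewrite pos_part_nonpos by lra.
    apply (is_derive_loc_eq _ (fun _ => 0) (y - 1) 0); [lra | |].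
    + intros x Hx. rewrite pos_part_nonpos by lra. ring.
    + auto_derive; auto. ring.
  - (* at the kink, [0 <= pos_part h ^ 2 <= h ^ 2] forces the derivative 0 *)
    rewrite pos_part_nonpos by lra.
    apply is_derive_Reals. intros e He. exists (mkposreal e He).
    intros h Hh Hhe. simpl in Hhe. rewrite Rplus_0_l, (pos_part_nonpos 0) by lra.
    destruct (Rle_dec 0 h).
    + rewrite pos_part_nonneg by lra.
      replace ((h ^ 2 - 0 ^ 2) / h - 2 * 0) with h by (field; auto). exact Hhe.
    + rewrite pos_part_nonpos by lra.
      replace ((0 ^ 2 - 0 ^ 2) / h - 2 * 0) with 0 by (field; auto).
      rewrite Rabs_R0; lra.
  - rewrite pos_part_nonneg by lra.
    apply (is_derive_loc_eq _ (fun x => x ^ 2) 0 (y + 1)); [lra | |].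
    + intros x Hx. rewrite pos_part_nonneg by lra. reflexivity.
    + auto_derive; auto. ring.
Qed.

Section Counterexample.

Variables a b eps : R.
Hypothesis heps : 0 < eps < b - a.

Definition mid : R := (a + b) / 2.
Definition c_eps : R := mid - eps / 2.
Definition d_eps : R := mid + eps / 2.

Lemma c_eps_d_eps_inside : a < c_eps /\ c_eps < d_eps /\ d_eps < b.
Proof. unfold c_eps, d_eps, mid. lra. Qed.

(* The [pos_part_sqr] corrections make [u_eps] C^1 and linear off [J], with slopes
   [eps] and [-eps]; the constant [peak] is what makes it vanish at [a] (and, by
   symmetry, at [b]). *)
Definition peak : R := eps / 2 * (b - a - eps / 2).

Definition u_eps (t : R) : R :=
  peak - (t - mid) ^ 2 + pos_part_sqr (t - d_eps) + pos_part_sqr (c_eps - t).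

Definition du_eps (t : R) : R :=
  - 2 * (t - mid) + 2 * pos_part (t - d_eps) - 2 * pos_part (c_eps - t).

Definition q_eps (t : R) : R :=
  match Rlt_dec c_eps t, Rlt_dec t d_eps with
  | left _, left _ => 2 / u_eps t
  | _, _ => 0
  end.

Lemma u_eps_left (t : R) : t <= c_eps -> u_eps t = eps * (t - a).
Proof.
  intros Ht. pose proof c_eps_d_eps_inside.
  unfold u_eps, pos_part_sqr. rewrite (pos_part_nonpos (t - _)), (pos_part_nonneg (_ - t)) by lra.
  unfold peak, c_eps, mid. field.
Qed.

Lemma u_eps_right (t : R) : d_eps <= t -> u_eps t = eps * (b - t).
Proof.
  intros Ht. pose proof c_eps_d_eps_inside.
  unfold u_eps, pos_part_sqr. rewrite (pos_part_nonneg (t - _)), (pos_part_nonpos (_ - t)) by lra.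
  unfold peak, d_eps, mid. field.
Qed.

Lemma u_eps_middle (t : R) : c_eps <= t <= d_eps -> u_eps t = peak - (t - mid) ^ 2.
Proof.
  intros Ht. unfold u_eps, pos_part_sqr.
  rewrite (pos_part_nonpos (t - _)), (pos_part_nonpos (_ - t)) by lra. ring.
Qed.

Lemma u_eps_pos (t : R) : a < t < b -> 0 < u_eps t.
Proof.
  intros Ht. pose proof c_eps_d_eps_inside.
  destruct (Rle_dec t c_eps); [rewrite u_eps_left by lra; nra|].
  destruct (Rle_dec d_eps t); [rewrite u_eps_right by lra; nra|].
  rewrite u_eps_middle by lra.
  assert (Hsq : (t - mid) ^ 2 <= (eps / 2) ^ 2).
  { unfold c_eps, d_eps in *. nra. }
  unfold peak. nra.
Qed.

Lemma u_eps_a : u_eps a = 0.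
Proof. pose proof c_eps_d_eps_inside. rewrite u_eps_left by lra. ring. Qed.

Lemma u_eps_b : u_eps b = 0.
Proof. pose proof c_eps_d_eps_inside. rewrite u_eps_right by lra. ring. Qed.

Lemma is_derive_u_eps (t : R) : is_derive u_eps t (du_eps t).
Proof.
  unfold u_eps, du_eps. auto_derive.
  - repeat split; eexists; apply is_derive_pos_part_sqr.
  - rewrite !(is_derive_unique _ _ _ (is_derive_pos_part_sqr _)).
    unfold Rminus. ring.
Qed.

Lemma continuous_u_eps (t : R) : continuous u_eps t.
Proof.
  apply (ex_derive_continuous (K := R_AbsRing) (V := R_NormedModule)).
  eexists. apply is_derive_u_eps.
Qed.

Lemma continuous_du_eps (t : R) : continuous du_eps t.
Proof.
  unfold du_eps.
  apply (continuous_minus (V := R_NormedModule)); [apply (continuous_plus (V := R_NormedModule))|].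
  - apply (continuous_scal_r (V := R_NormedModule) (-2)).
    apply (continuous_minus (V := R_NormedModule)); [apply continuous_id | apply continuous_const].
  - apply (continuous_scal_r (V := R_NormedModule) 2).
    apply (continuous_comp (fun x => x - d_eps)), continuous_pos_part.
    apply (continuous_minus (V := R_NormedModule)); [apply continuous_id | apply continuous_const].
  - apply (continuous_scal_r (V := R_NormedModule) 2).
    apply (continuous_comp (fun x => c_eps - x)), continuous_pos_part.
    apply (continuous_minus (V := R_NormedModule)); [apply continuous_const | apply continuous_id].
Qed.

Lemma du_eps_left (t : R) : t <= c_eps -> du_eps t = eps.
Proof.
  intros Ht. pose proof c_eps_d_eps_inside. unfold du_eps.
  rewrite (pos_part_nonpos (t - _)), (pos_part_nonneg (_ - t)) by lra.
  unfold c_eps. field.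
Qed.

Lemma du_eps_right (t : R) : d_eps <= t -> du_eps t = - eps.
Proof.
  intros Ht. pose proof c_eps_d_eps_inside. unfold du_eps.
  rewrite (pos_part_nonneg (t - _)), (pos_part_nonpos (_ - t)) by lra.
  unfold d_eps. field.
Qed.

Lemma du_eps_middle (t : R) : c_eps <= t <= d_eps -> du_eps t = - 2 * (t - mid).
Proof.
  intros Ht. unfold du_eps.
  rewrite (pos_part_nonpos (t - _)), (pos_part_nonpos (_ - t)) by lra. ring.
Qed.

Lemma is_derive_du_eps (t : R) : a < t < b -> t <> c_eps -> t <> d_eps ->
  is_derive du_eps t (- (q_eps t * u_eps t)).
Proof.
  intros Ht Hc Hd. pose proof c_eps_d_eps_inside. unfold q_eps.
  destruct (Rlt_dec c_eps t) as [Hct|Hct]; [destruct (Rlt_dec t d_eps) as [Htd|Htd]|].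
  - pose proof (u_eps_pos t Ht).
    replace (- (2 / u_eps t * u_eps t)) with (-2) by (field; lra).
    apply (is_derive_loc_eq _ (fun x => - 2 * (x - mid)) c_eps d_eps); [lra | |].
    + intros x Hx. apply du_eps_middle. lra.
    + auto_derive; auto. ring.
  - apply (is_derive_loc_eq _ (fun _ => - eps) d_eps b); [lra | |].
    + intros x Hx. apply du_eps_right. lra.
    + auto_derive; auto. ring.
  - apply (is_derive_loc_eq _ (fun _ => eps) a c_eps); [lra | |].
    + intros x Hx. apply du_eps_left. lra.
    + auto_derive; auto. ring.
Qed.

Lemma is_solution_u_eps : is_solution q_eps u_eps a b.
Proof.
  pose proof c_eps_d_eps_inside. exists du_eps. split; [|split; [|split]].
  - intros t _. apply is_derive_u_eps.
  - intros t _. split; apply cont_within_continuous;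
      [apply continuous_u_eps | apply continuous_du_eps].
  - exists (c_eps :: d_eps :: nil). intros t Ht Hn.
    apply is_derive_du_eps; [exact Ht | |]; intros ->; apply Hn; simpl; auto.
  - exists mid. split; [unfold mid; lra|].
    apply Rgt_not_eq, u_eps_pos. unfold mid; lra.
Qed.

Lemma q_eps_inside (t : R) : c_eps < t < d_eps -> q_eps t = 2 / u_eps t.
Proof.
  intros [Hc Hd]. unfold q_eps.
  destruct (Rlt_dec c_eps t); [destruct (Rlt_dec t d_eps)|]; easy.
Qed.

Lemma q_eps_outside (t : R) : ~ (c_eps < t < d_eps) -> q_eps t = 0.
Proof.
  intros Ht. unfold q_eps.
  destruct (Rlt_dec c_eps t); [destruct (Rlt_dec t d_eps)|]; [|reflexivity..].
  exfalso. apply Ht. split; assumption.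
Qed.

Lemma q_eps_pos (t : R) : c_eps < t < d_eps -> 0 < q_eps t.
Proof.
  intros Ht. pose proof c_eps_d_eps_inside. rewrite q_eps_inside by exact Ht.
  apply Rdiv_lt_0_compat; [lra | apply u_eps_pos; lra].
Qed.

Lemma piecewise_continuous_q_eps : piecewise_continuous q_eps a b.
Proof.
  pose proof c_eps_d_eps_inside as (Hac & Hcd & Hdb).
  apply (piecewise_continuous_supported _ (fun t => 2 / u_eps t) a c_eps d_eps b);
    [exact Hac | exact Hcd | exact Hdb | | exact q_eps_inside |].
  - intros t Ht. apply (continuous_scal_r (V := R_NormedModule) 2).
    apply continuous_Rinv_comp; [apply continuous_u_eps|].
    apply Rgt_not_eq, u_eps_pos. lra.
  - intros t _ Ht. now apply q_eps_outside.
Qed.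

End Counterexample.

Theorem theorem1 (a b : R) (hab : a < b) :
  exists eps0 : R, 0 < eps0 /\
  forall eps : R, 0 < eps < eps0 ->
  exists (q1 q2 : R -> R) (J : R -> Prop) (c d : R),
    piecewise_continuous q1 a b /\ piecewise_continuous q2 a b /\
    (* J is an interval with endpoints c < d, of length eps, inside (a,b) *)
    d - c = eps /\
    (forall t, c < t < d -> J t) /\
    (forall t, J t -> c <= t <= d) /\
    (forall t, J t -> a < t < b) /\
    (forall t, a <= t <= b -> ~ J t -> q1 t <= q2 t) /\
    (forall t, J t -> q1 t > q2 t) /\
    (exists u, is_solution q1 u a b /\ u a = 0 /\ u b = 0 /\
               (forall t, a < t < b -> u t <> 0)) /\
    (exists v, is_solution q2 v a b /\ (forall t, a <= t <= b -> v t <> 0)).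
Proof.
  exists (b - a). split; [lra|]. intros eps heps.
  pose proof (c_eps_d_eps_inside a b eps heps) as (Hac & Hcd & Hdb).
  exists (q_eps a b eps), (fun _ => 0), (fun t => c_eps a b eps < t < d_eps a b eps),
    (c_eps a b eps), (d_eps a b eps).
  split; [exact (piecewise_continuous_q_eps a b eps heps)|].
  split; [exact (piecewise_continuous_const 0 a b hab)|].
  split; [unfold c_eps, d_eps; field|].
  split; [intros t Ht; exact Ht|].
  split; [intros t Ht; lra|].
  split; [intros t Ht; lra|].
  split; [intros t _ HJ; rewrite (q_eps_outside a b eps t HJ); lra|].
  split; [exact (q_eps_pos a b eps heps)|].
  split.
  - exists (u_eps a b eps). split; [exact (is_solution_u_eps a b eps heps)|].
    split; [exact (u_eps_a a b eps heps)|]. split; [exact (u_eps_b a b eps heps)|].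
    intros t Ht. exact (Rgt_not_eq _ _ (u_eps_pos a b eps heps t Ht)).
  - exists (fun _ => 1). split; [apply is_solution_const; lra|].
    intros t _. lra.
Qed.
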